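(* Let $X$ be a finite, simple, connected $3$-valent plane graph such that the number of edges surrounding each face is divisible by $3$. Then there exists an edge numbering $\nu\colon E(X)\to\{1,2,3\}$ such that, at every vertex $p\in V(X)$, the three edges having $p$ as an endpoint receive the numbers $1,2,3$ in this cyclic order with respect to the positive (counterclockwise) orientation around $p$. *)

(* Plane graphs are encoded as combinatorial maps
   (rotation systems) of genus 0, the standard combinatorial model of
   a connected graph embedded in the oriented plane/sphere. *)
From mathcomp Require Import all_boot.
Set Implicit Arguments. Unset Strict Implicit. Unset Printing Implicit Defensive.

(* A combinatorial map on a finite set of darts (half-edges) T:
   - edge  : the fixed-point-free involution pairing the two darts of an edge;
   - node  : the permutation sending a dart to the next dart around the same
             vertex in the positive (counterclockwise) orientation.
   Vertices = node-orbits, edges = edge-orbits, faces = face-orbits where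
   face := node \o edge (the face permutation). *)
Record cmap := CMap {
  dart :> finType;
  edge : dart -> dart;
  node : dart -> dart;
  edgeK : involutive edge;
  edge_nofix : forall x, edge x != x;
  node_inj : injective node
}.

Definition face (G : cmap) (x : G) : G := node (edge x).

Definition n_vertices (G : cmap) : nat := fcard (@node G) G.
Definition n_edges (G : cmap) : nat := fcard (@edge G) G.
Definition n_faces (G : cmap) : nat := fcard (@face G) G.

Definition cmap_connected (G : cmap) : Prop :=
  forall x y : G, connect (fun a b : G => (b == node a) || (b == edge a)) x y.

(* plane (genus 0) embedding: Euler's formula V - E + F = 2 *)
Definition cmap_planar (G : cmap) : Prop :=
  (n_vertices G + n_faces G = n_edges G + 2)%N.

Definition cmap_cubic (G : cmap) : Prop :=
  forall x : G, order (@node G) x = 3.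

(* simple: no loops and no multiple edges *)
Definition cmap_simple (G : cmap) : Prop :=
  (forall x : G, ~~ fconnect (@node G) x (edge x)) /\
  (forall x y : G, fconnect (@node G) x y ->
     fconnect (@node G) (edge x) (edge y) -> x = y).

Definition face_degree (G : cmap) (x : G) : nat := order (@face G) x.

(* an edge numbering E(X) -> {1,2,3}, represented on darts and constant on
   the two darts of each edge *)
Definition edge_numbering (G : cmap) (nu : G -> nat) : Prop :=
  (forall x : G, nu x \in [:: 1; 2; 3]) /\
  (forall x : G, nu (edge x) = nu x).

(* around every vertex, the numbers 1,2,3 appear in this cyclic order in the
   counterclockwise direction: the next edge ccw after one numbered k is
   numbered k+1 (mod 3, in {1,2,3}) *)
Definition ccw_123 (G : cmap) (nu : G -> nat) : Prop :=
  forall x : G, nu (node x) = (nu x %% 3).+1.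

From mathcomp Require Import all_boot all_algebra zify.
Set Implicit Arguments. Unset Strict Implicit. Unset Printing Implicit Defensive.
Import GRing.Theory.
Local Open Scope ring_scope.

(* Work over a field K of characteristic 3 and look for c : darts -> K,
   constant on edges, with c (node x) = c x + 1; reading c + 1 in {1, 2, 3}
   gives the numbering.  So the constant row 1 must lie in the image of the
   coboundary d : c |-> c \o node - c on edge functions.  The image of d is
   orthogonal to the vertex indicators and to the functions x |-> [edge x in f]
   for the faces f, and so is 1, as vertex and face degrees are divisible by 3.
   By connectivity both d and this family of V + F vectors have left kernels
   of dimension <= 1, so rank d >= E - 1 and the family spans a space of
   dimension >= V + F - 1 = E + 1 (Euler).  Since there are 2E darts, its
   orthogonal complement has dimension <= E - 1, hence is the image of d. *)

Section DartRows.
Variables (K : pzRingType) (D : finType).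
Local Notation n := #|D|.

Definition rval (c : 'rV[K]_n) (x : D) : K := c 0 (enum_rank x).

Lemma rvalP (c d : 'rV[K]_n) : rval c =1 rval d -> c = d.
Proof. by move=> cd; apply/rowP => j; rewrite -(enum_valK j); apply: cd. Qed.

Lemma rvalD (c d : 'rV[K]_n) x : rval (c + d) x = rval c x + rval d x.
Proof. by rewrite /rval mxE. Qed.

Lemma rvalB (c d : 'rV[K]_n) x : rval (c - d) x = rval c x - rval d x.
Proof. by rewrite /rval !mxE. Qed.

Lemma sum_mulr_eq m (F : 'I_m -> K) (k : 'I_m) :
  \sum_i F i * (i == k)%:R = F k.
Proof.
rewrite (bigD1 k) //= eqxx mulr1 big1 ?addr0 // => i /negbTE->.
by rewrite mulr0.
Qed.

Lemma mulmx_trE m p (M : 'M[K]_(m, n)) (N : 'M[K]_(p, n)) i j :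
  (M *m N^T) i j = \sum_x rval (row i M) x * rval (row j N) x.
Proof.
rewrite mxE (reindex (@enum_rank D)) /=; last exact/onW_bij/enum_rank_bij.
by apply: eq_bigr => x _; rewrite /rval !mxE.
Qed.

Definition fun_mx (f : D -> D) : 'M[K]_n :=
  \matrix_(i, j) (enum_val i == f (enum_val j))%:R.

Lemma rval_mul_fun_mx (c : 'rV[K]_n) f x :
  rval (c *m fun_mx f) x = rval c (f x).
Proof.
rewrite /rval mxE -[RHS](sum_mulr_eq (c 0)); apply: eq_bigr => i _.
rewrite mxE enum_rankK; congr (_ * _%:R).
by rewrite -(inj_eq enum_rank_inj) enum_valK.
Qed.

End DartRows.

Section OrbitMatrix.
Variables (K : pzRingType) (D : finType) (p : D -> D).
Hypothesis p_inj : injective p.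

Lemma froot_f x : froot p (p x) = froot p x.
Proof.
apply/eqP; rewrite (root_connect (fconnect_sym p_inj)).
by rewrite (fconnect_sym p_inj) fconnect1.
Qed.

Lemma froot_froots x : x \in froots p -> froot p x = x.
Proof. by move/eqP. Qed.

Lemma froot_eq_froots x y :
  y \in froots p -> (froot p x == y) = fconnect p y x.
Proof.
move/froot_froots=> {1}<-.
by rewrite (root_connect (fconnect_sym p_inj)) (fconnect_sym p_inj).
Qed.

Lemma card_froots : #|froots p| = fcard p D.
Proof. by apply: eq_card => x; rewrite !inE andbT. Qed.

Definition orbit_mx : 'M[K]_(#|froots p|, #|D|) :=
  \matrix_(i, j) (froot p (enum_val j) == enum_val i)%:R.

Lemma rval_row_orbit_mx i x :
  rval (row i orbit_mx) x = (fconnect p (enum_val i) x)%:R.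
Proof. by rewrite /rval !mxE enum_rankK froot_eq_froots ?enum_valP. Qed.

Lemma rval_row_orbit_mx_f i x :
  rval (row i orbit_mx) (p x) = rval (row i orbit_mx) x.
Proof. by rewrite /rval !mxE !enum_rankK froot_f. Qed.

Lemma rval_mul_orbit_mx_f w x :
  rval (w *m orbit_mx) (p x) = rval (w *m orbit_mx) x.
Proof.
rewrite /rval !mxE; apply: eq_bigr => i _.
by rewrite !mxE !enum_rankK froot_f.
Qed.

Lemma sum_row_orbit_mx i :
  \sum_x rval (row i orbit_mx) x = (order p (enum_val i))%:R.
Proof.
under eq_bigr do rewrite rval_row_orbit_mx.
rewrite -natr_sum /order -sum1_card; congr _%:R.
by rewrite [RHS]big_mkcond; apply: eq_bigr => x _; rewrite unfold_in.
Qed.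

End OrbitMatrix.

Lemma orbit_mx_free (K : fieldType) (D : finType) (p : D -> D) :
  row_free (orbit_mx K p).
Proof.
apply: inj_row_free => v v0; apply/rowP => i; rewrite [RHS]mxE.
have := congr1 (fun w => rval w (enum_val i)) v0; rewrite /rval !mxE => <-.
rewrite -[LHS](sum_mulr_eq (v 0)); apply: eq_bigr => k _.
rewrite mxE enum_rankK froot_froots ?enum_valP //.
by rewrite (inj_eq enum_val_inj) eq_sym.
Qed.

Lemma const_row_scale (K : pzRingType) n (g : 'rV[K]_n) :
  (forall j k, g 0 j = g 0 k) -> exists a, g = a *: const_mx 1.
Proof.
case: n g => [|n] g g_const; last exists (g 0 0).
  by exists 0; apply/rowP => -[].
by apply/rowP => j; rewrite !mxE mulr1 (g_const j 0).
Qed.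

Lemma rank_kermx_le1 (K : fieldType) m n p (A : 'M[K]_(m, n))
    (B : 'M_(m, p)) (r : 'rV_p) :
  row_free B -> (forall v : 'rV_m, v *m A = 0 -> exists a, v *m B = a *: r) ->
  (\rank (kermx A) <= 1)%N.
Proof.
move=> B_free ker_line; rewrite -(mxrankMfree _ B_free).
apply: leq_trans (rank_leq_row r); apply: mxrankS.
apply/row_subP => i; rewrite row_mul.
have ker_i : row i (kermx A) *m A = 0 by rewrite -row_mul mulmx_ker row0.
by have [a ->] := ker_line _ ker_i; rewrite scalemx_sub.
Qed.

Lemma cmap_connected_const (G : cmap) (T : Type) (g : G -> T) :
  cmap_connected G -> (forall x, g (node x) = g x) ->
  (forall x, g (edge x) = g x) -> forall x y, g x = g y.
Proof.
move=> G_conn g_node g_edge x y; have /connectP[q xq ->] := G_conn x y.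
elim: q x xq => //= z q IHq x /andP[/orP[]/eqP-> /IHq <-].
  by rewrite g_node.
by rewrite g_edge.
Qed.

Lemma edge_inj (G : cmap) : injective (@edge G).
Proof. exact: can_inj (@edgeK G). Qed.

Lemma face_inj (G : cmap) : injective (@face G).
Proof. by move=> x y /node_inj /edge_inj. Qed.

Lemma order_edge (G : cmap) (x : G) : order (@edge G) x = 2%N.
Proof.
have edge_cycle : fcycle (@edge G) [:: x; edge x] by rewrite /= edgeK !eqxx.
have edge_uniq : uniq [:: x; edge x] by rewrite /= inE eq_sym edge_nofix.
exact: (order_cycle edge_cycle edge_uniq (mem_head _ _)).
Qed.

Lemma card_darts (G : cmap) : #|G| = (n_edges G * 2)%N.
Proof.
rewrite /n_edges (fcard_order_set (@edge_inj G)) //.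
by apply/subsetP => x _; rewrite inE order_edge.
Qed.

Section CubicPlaneMap.
Variables (K : fieldType) (X : cmap).
Local Notation node := (@node X).
Local Notation edge := (@edge X).
Local Notation face := (@face X).
Hypotheses (X_connected : cmap_connected X) (X_planar : cmap_planar X).
Hypothesis X_cubic : cmap_cubic X.
Hypothesis X_faces : forall x : X, (3 %| face_degree x)%N.
Hypothesis char3 : 3 \in [pchar K].

Lemma node_face_edge_invariant (V : zmodType) (g h : X -> V) :
  (forall x, g (node x) = g x) -> (forall x, h (face x) = h x) ->
  (forall x, g x + h (edge x) = 0) -> forall x, g (edge x) = g x.
Proof.
move=> g_node h_face gh0 y.
have g_opp x : g x = - h (edge x) by apply/eqP; rewrite -addr_eq0 gh0.
have node_face u : node u = face (edge u) by rewrite /face edgeK.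
rewrite -(f_finv (@node_inj X) y) g_node g_opp edgeK node_face h_face.
by rewrite -g_opp.
Qed.

Lemma sum_node_diff_vertex (e v : X -> K) :
  (forall x, v (node x) = v x) -> \sum_x (e (node x) - e x) * v x = 0.
Proof.
move=> v_node.
rewrite (eq_bigr (fun x => e (node x) * v (node x) - e x * v x)) => [|x _].
  by rewrite sumrB [S in _ - S](reindex_inj (@node_inj X)) subrr.
by rewrite mulrBl v_node.
Qed.

Lemma sum_node_diff_face (e f : X -> K) :
  (forall x, e (edge x) = e x) -> (forall x, f (face x) = f x) ->
  \sum_x (e (node x) - e x) * f (edge x) = 0.
Proof.
move=> e_edge f_face; under eq_bigr do rewrite mulrBl; rewrite sumrB.
have -> : \sum_x e (node x) * f (edge x) = \sum_x e x * f x.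
  rewrite (reindex_inj (@edge_inj X)) [RHS](reindex_inj (@face_inj X)).
  by apply: eq_bigr => x _; rewrite edgeK f_face.
have -> : \sum_x e x * f (edge x) = \sum_x e x * f x.
  rewrite (reindex_inj (@edge_inj X)).
  by apply: eq_bigr => x _; rewrite edgeK e_edge.
by rewrite subrr.
Qed.

Definition edge_coboundary_mx : 'M[K]_(#|froots edge|, #|X|) :=
  orbit_mx K edge *m (fun_mx K node - 1%:M).

Definition vertex_face_mx : 'M[K]_(#|froots node| + #|froots face|, #|X|) :=
  col_mx (orbit_mx K node) (orbit_mx K face *m fun_mx K edge).

Lemma rval_mul_node_diff (c : 'rV[K]_#|X|) x :
  rval (c *m (fun_mx K node - 1%:M)) x = rval c (node x) - rval c x.
Proof. by rewrite mulmxBr mulmx1 rvalB rval_mul_fun_mx. Qed.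

Lemma edge_coboundary_vertex_face_orth :
  edge_coboundary_mx *m vertex_face_mx^T = 0.
Proof.
rewrite tr_col_mx mul_mx_row -row_mx0.
congr row_mx; apply/matrixP => i j; rewrite mulmx_trE mxE row_mul.
  under eq_bigr do rewrite rval_mul_node_diff.
  exact/sum_node_diff_vertex/rval_row_orbit_mx_f/node_inj.
under eq_bigr do rewrite rval_mul_node_diff row_mul rval_mul_fun_mx.
apply: sum_node_diff_face; apply: rval_row_orbit_mx_f.
  exact: edge_inj.
exact: face_inj.
Qed.

Lemma const_vertex_face_orth :
  (const_mx 1 : 'rV[K]_#|X|) *m vertex_face_mx^T = 0.
Proof.
rewrite tr_col_mx mul_mx_row -row_mx0.
congr row_mx; apply/matrixP => i j; rewrite mulmx_trE mxE.
  under eq_bigr do rewrite {1}/rval !mxE mul1r.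
  rewrite (sum_row_orbit_mx _ (@node_inj X)).
  by apply/eqP; rewrite -(dvdn_pcharf char3) X_cubic.
under eq_bigr do rewrite {1}/rval !mxE mul1r row_mul rval_mul_fun_mx.
rewrite (reindex_inj (@edge_inj X)); under eq_bigr do rewrite edgeK.
rewrite (sum_row_orbit_mx _ (@face_inj X)); apply/eqP.
by rewrite -(dvdn_pcharf char3) X_faces.
Qed.

Lemma node_edge_invariant_row_const (c : 'rV[K]_#|X|) :
  (forall x, rval c (node x) = rval c x) ->
  (forall x, rval c (edge x) = rval c x) -> exists a, c = a *: const_mx 1.
Proof.
move=> c_node c_edge; apply: const_row_scale => j k.
rewrite -(enum_valK j) -(enum_valK k).
exact: (cmap_connected_const X_connected c_node c_edge (enum_val j)).
Qed.

Lemma rank_kermx_edge_coboundary :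
  (\rank (kermx edge_coboundary_mx) <= 1)%N.
Proof.
apply: (rank_kermx_le1 (r := const_mx 1) (orbit_mx_free K edge)) => v.
rewrite mulmxA => v0; apply: node_edge_invariant_row_const => x.
  by apply/eqP; rewrite -subr_eq0 -rval_mul_node_diff v0 /rval mxE.
exact: rval_mul_orbit_mx_f (@edge_inj X) _ _.
Qed.

Lemma rank_kermx_vertex_face : (\rank (kermx vertex_face_mx) <= 1)%N.
Proof.
have B_free : row_free (block_mx (orbit_mx K node) 0 0 (orbit_mx K face)).
  by rewrite /row_free rank_diag_block_mx !(eqP (orbit_mx_free _ _)).
apply: (rank_kermx_le1 (r := row_mx (const_mx 1) (const_mx (-1))) B_free).
move=> v; rewrite -(hsubmxK v) mul_row_col mul_row_block.
rewrite !mulmx0 addr0 add0r mulmxA.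
set g := lsubmx v *m _; set h := rsubmx v *m _ => gh0.
have g_node x : rval g (node x) = rval g x.
  exact: rval_mul_orbit_mx_f (@node_inj X) _ _.
have h_face x : rval h (face x) = rval h x.
  exact: rval_mul_orbit_mx_f (@face_inj X) _ _.
have gh x : rval g x + rval h (edge x) = 0.
  by rewrite -rval_mul_fun_mx -rvalD gh0 /rval mxE.
have g_edge := node_face_edge_invariant g_node h_face gh.
have [a g_a] := node_edge_invariant_row_const g_node g_edge.
exists a; rewrite scale_row_mx -g_a; congr row_mx; apply: rvalP => x.
have := gh (edge x); rewrite edgeK g_a /rval !mxE mulr1 mulrN1 => /eqP.
by rewrite addrC addr_eq0 => /eqP.
Qed.

Lemma const_sub_edge_coboundary :
  ((const_mx 1 : 'rV[K]_#|X|) <= edge_coboundary_mx)%MS.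
Proof.
have rank_A := rank_kermx_edge_coboundary.
have rank_Y := rank_kermx_vertex_face.
rewrite !mxrank_ker in rank_A rank_Y.
have darts := card_darts X; have euler : cmap_planar X := X_planar.
rewrite /cmap_planar /n_vertices /n_faces /n_edges -!card_froots in darts euler.
have A_sub : (edge_coboundary_mx <= kermx vertex_face_mx^T)%MS.
  by rewrite sub_kermx edge_coboundary_vertex_face_orth.
have ker_sub : (kermx vertex_face_mx^T <= edge_coboundary_mx)%MS.
  rewrite -(mxrank_leqif_sup A_sub).2 eqn_leq mxrankS //=.
  rewrite mxrank_ker mxrank_tr.
  move: (\rank _) (\rank _) rank_A rank_Y => rA rY; rewrite darts; lia.
by apply: submx_trans ker_sub; rewrite sub_kermx const_vertex_face_orth.
Qed.

Lemma cubic_plane_map_potential : exists c : X -> K,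
  (forall x, c (edge x) = c x) /\ (forall x, c (node x) = c x + 1).
Proof.
have /submxP[w w_def] := const_sub_edge_coboundary.
exists (rval (w *m orbit_mx K edge)); split => x.
  exact: rval_mul_orbit_mx_f (@edge_inj X) _ _.
have := congr1 (fun c => rval c x) w_def.
rewrite mulmxA rval_mul_node_diff /rval mxE => /eqP.
by rewrite eq_sym subr_eq addrC => /eqP.
Qed.

End CubicPlaneMap.

Local Close Scope ring_scope.

Theorem proposition2p9 (X : cmap) :
  cmap_connected X -> cmap_planar X -> cmap_simple X -> cmap_cubic X ->
  (forall x : X, 3 %| face_degree x) ->
  exists nu : X -> nat, edge_numbering nu /\ ccw_123 nu.
Proof.
move=> X_conn X_planar _ X_cubic X_faces.
have [c [c_edge c_node]] := cubic_plane_map_potential (K := 'F_3)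
  X_conn X_planar X_cubic X_faces (@pchar_Fp 3 isT).
exists (fun x => (val (c x)).+1); split; [split|] => x.
- by case: (c x) => [[|[|[|]]] ?].
- by rewrite c_edge.
- by rewrite c_node; case: (c x) => [[|[|[|]]] ?].
Qed.
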